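(* Let $z\in\overline U$ and $Z_n=(z_1,\dots,z_n)\in\overline U^{\,n}$ (with all denominators below nonzero). Then \[ |B(Z_n,z)|\le\exp\Big(-\frac{1-|z|^2}{4}\sum_{j=1}^n(1-|z_j|)\Big),\qquad |B_k(Z_n,z)|\le 2\exp\Big(-\frac{1-|z|^2}{4}\sum_{j=1}^n(1-|z_j|)\Big) \] for each $k=1,\dots,n$.
   Context: $U$ is the open unit disc. For $Z_n=(z_1,\dots,z_n)$, $B(Z_n,z)=\prod_{j=1}^n\frac{z-z_j}{1-\overline{z_j}z}$ and $B_k(Z_n,z)=\prod_{1\le j\ne k\le n}\frac{z-z_j}{1-\overline{z_j}z}$. *)

From Stdlib Require Import Reals.
From Coquelicot Require Import Coquelicot.
Open Scope R_scope.

Definition bfactor (w z : C) : C :=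
  Cdiv (Cminus z w) (Cminus (RtoC 1) (Cmult (Cconj w) z)).

Fixpoint cprod (n : nat) (f : nat -> C) : C :=
  match n with
  | O => RtoC 1
  | S m => Cmult (cprod m f) (f m)
  end.

Fixpoint rsum (n : nat) (f : nat -> R) : R :=
  match n with
  | O => 0
  | S m => rsum m f + f m
  end.

(* Z_n = (Zs 0, ..., Zs (n-1)) (0-based indexing). *)
Definition Blaschke (n : nat) (Zs : nat -> C) (z : C) : C :=
  cprod n (fun j => bfactor (Zs j) z).

Definition Blaschke_k (n : nat) (Zs : nat -> C) (k : nat) (z : C) : C :=
  cprod n (fun j => if Nat.eqb j k then RtoC 1 else bfactor (Zs j) z).

(** Each Blaschke factor satisfies |1 - w̄z|² - |z - w|² = (1 - |w|²)(1 - |z|²), and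
    since |1 - w̄z| ≤ 1 + |w| ≤ 2 this gives |b_w(z)|² ≤ 1 - (1 - |z|²)(1 - |w|)/2,
    hence |b_w(z)| ≤ exp(-(1 - |z|²)(1 - |w|)/4) by 1 + x ≤ eˣ.  Multiplying these
    bounds gives the estimate for B; for B_k the missing factor costs at most
    exp((1 - |z|²)(1 - |z_k|)/4) ≤ e^{1/4} ≤ 2. *)

From Stdlib Require Import Reals Lra Psatz.
From Coquelicot Require Import Coquelicot.
Open Scope R_scope.

Lemma bfactor_den_num_identity (w z : C) :
  Cmod (Cminus (RtoC 1) (Cmult (Cconj w) z)) ^ 2 - Cmod (Cminus z w) ^ 2
  = (1 - Cmod w ^ 2) * (1 - Cmod z ^ 2).
Proof.
  rewrite !Cmod2_alt. destruct w as [a b], z as [c d].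
  unfold Cminus, Cmult, Cconj, Cplus, Copp, RtoC; simpl. ring.
Qed.

Lemma Cmod_bfactor_den_le (w z : C) :
  Cmod (Cminus (RtoC 1) (Cmult (Cconj w) z)) <= 1 + Cmod w * Cmod z.
Proof.
  unfold Cminus. eapply Rle_trans; [apply Cmod_triangle |].
  rewrite Cmod_opp, Cmod_mult, Cmod_conj, Cmod_1. lra.
Qed.

Lemma Cmod_bfactor_sqr_le (w z : C) :
  Cmod z <= 1 -> Cmod w <= 1 ->
  Cminus (RtoC 1) (Cmult (Cconj w) z) <> RtoC 0 ->
  Cmod (bfactor w z) ^ 2 <= 1 - (1 - Cmod z ^ 2) * (1 - Cmod w) / 2.
Proof.
  intros hz hw hden. unfold bfactor. rewrite Cmod_div by auto.
  pose proof (bfactor_den_num_identity w z) as identity.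
  pose proof (Cmod_bfactor_den_le w z) as den_le.
  assert (den_pos : 0 < Cmod (Cminus (RtoC 1) (Cmult (Cconj w) z)))
    by (apply Cmod_gt_0; auto).
  pose proof (Cmod_ge_0 w). pose proof (Cmod_ge_0 z).
  set (D := Cmod (Cminus (RtoC 1) (Cmult (Cconj w) z))) in *.
  set (N := Cmod (Cminus z w)) in *.
  set (r := Cmod w) in *. set (s := Cmod z) in *.
  assert (x_nonneg : 0 <= (1 - s ^ 2) * (1 - r)) by (apply Rmult_le_pos; nra).
  (* N² = D² - (1 + r)x and D² ≤ (1 + r)² ≤ 2(1 + r), where x = (1 - s²)(1 - r). *)
  assert (den_le_sum : D <= 1 + r) by nra.
  assert (den_sqr_le : D ^ 2 <= 2 * (1 + r)) by nra.
  assert (num_le : N ^ 2 <= D ^ 2 * (1 - (1 - s ^ 2) * (1 - r) / 2)).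
  { assert (0 <= (2 * (1 + r) - D ^ 2) * ((1 - s ^ 2) * (1 - r)))
      by (apply Rmult_le_pos; lra).
    nra. }
  replace ((N / D) ^ 2) with (N ^ 2 / D ^ 2) by (field; lra).
  apply Rle_div_l; nra.
Qed.

Lemma le_exp_opp_of_sqr_le (x a : R) :
  0 <= x -> x ^ 2 <= 1 - 2 * a -> x <= exp (- a).
Proof.
  intros x_nonneg x_sqr_le.
  assert (sqr_exp : exp (- a) ^ 2 = exp (- (2 * a)))
    by (simpl; rewrite Rmult_1_r, <- exp_plus; f_equal; ring).
  pose proof (exp_ineq1_le (- (2 * a))).
  apply Rsqr_incr_0_var; [| left; apply exp_pos].
  rewrite !Rsqr_pow2. lra.
Qed.

Lemma Cmod_bfactor_le_exp (w z : C) :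
  Cmod z <= 1 -> Cmod w <= 1 ->
  Cminus (RtoC 1) (Cmult (Cconj w) z) <> RtoC 0 ->
  Cmod (bfactor w z) <= exp (- ((1 - Cmod z ^ 2) / 4) * (1 - Cmod w)).
Proof.
  intros hz hw hden.
  replace (- ((1 - Cmod z ^ 2) / 4) * (1 - Cmod w))
    with (- ((1 - Cmod z ^ 2) * (1 - Cmod w) / 4)) by field.
  apply le_exp_opp_of_sqr_le; [apply Cmod_ge_0 |].
  replace (1 - 2 * ((1 - Cmod z ^ 2) * (1 - Cmod w) / 4))
    with (1 - (1 - Cmod z ^ 2) * (1 - Cmod w) / 2) by field.
  apply Cmod_bfactor_sqr_le; assumption.
Qed.

Lemma Cmod_cprod_le_exp (n : nat) (f : nat -> C) (a : nat -> R) :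
  (forall j, (j < n)%nat -> Cmod (f j) <= exp (a j)) ->
  Cmod (cprod n f) <= exp (rsum n a).
Proof.
  induction n as [| n IHn]; intros hf; simpl.
  - rewrite Cmod_1, exp_0. lra.
  - rewrite Cmod_mult, exp_plus.
    apply Rmult_le_compat; try apply Cmod_ge_0.
    + apply IHn. intros j hj. apply hf. lia.
    + apply hf. lia.
Qed.

Lemma rsum_mult_l (n : nat) (k : R) (g : nat -> R) :
  rsum n (fun j => k * g j) = k * rsum n g.
Proof. induction n as [| n IHn]; simpl; [ring | rewrite IHn; ring]. Qed.

Lemma rsum_update (n k : nat) (v : R) (f : nat -> R) : (k < n)%nat ->
  rsum n (fun j => if Nat.eqb j k then v else f j) = rsum n f - f k + v.
Proof.
  induction n as [| n IHn]; intros hk; simpl; [lia |].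
  destruct (Nat.eqb n k) eqn:n_k.
  - apply Nat.eqb_eq in n_k. subst k.
    assert (unchanged : forall m, (m <= n)%nat ->
      rsum m (fun j => if Nat.eqb j n then v else f j) = rsum m f).
    { induction m as [| m IHm]; intros hm; simpl; [reflexivity |].
      rewrite IHm by lia.
      replace (Nat.eqb m n) with false by (symmetry; apply Nat.eqb_neq; lia).
      reflexivity. }
    rewrite unchanged by lia. ring.
  - apply Nat.eqb_neq in n_k. rewrite IHn by lia. ring.
Qed.

Lemma exp_le_2 (t : R) : t <= / 2 -> exp t <= 2.
Proof.
  intros ht. rewrite <- (exp_ln 2) by lra.
  left. apply exp_increasing. pose proof ln_lt_2. lra.
Qed.

Theorem proposition2p2 (n : nat) (Zs : nat -> C) (z : C)
  (hz : Cmod z <= 1)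
  (hZ : forall j, (j < n)%nat -> Cmod (Zs j) <= 1)
  (hden : forall j, (j < n)%nat ->
          Cminus (RtoC 1) (Cmult (Cconj (Zs j)) z) <> RtoC 0) :
  let E := exp (- ((1 - Cmod z ^ 2) / 4) * rsum n (fun j => 1 - Cmod (Zs j))) in
  Cmod (Blaschke n Zs z) <= E /\
  (forall k, (k < n)%nat -> Cmod (Blaschke_k n Zs k z) <= 2 * E).
Proof.
  intros E. set (c := (1 - Cmod z ^ 2) / 4) in E.
  split.
  - unfold Blaschke, E. rewrite <- rsum_mult_l.
    apply Cmod_cprod_le_exp. intros j hj. apply Cmod_bfactor_le_exp; auto.
  - intros k hk. unfold Blaschke_k.
    eapply Rle_trans.
    { apply (Cmod_cprod_le_exp _ _
        (fun j => if Nat.eqb j k then 0 else - c * (1 - Cmod (Zs j)))).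
      intros j hj. destruct (Nat.eqb j k).
      - rewrite Cmod_1, exp_0. lra.
      - apply Cmod_bfactor_le_exp; auto. }
    rewrite rsum_update, rsum_mult_l by exact hk.
    replace (- c * rsum n (fun j => 1 - Cmod (Zs j)) - - c * (1 - Cmod (Zs k)) + 0)
      with (c * (1 - Cmod (Zs k)) + - c * rsum n (fun j => 1 - Cmod (Zs j)))
      by ring.
    rewrite exp_plus. fold E.
    apply Rmult_le_compat_r; [left; apply exp_pos |].
    apply exp_le_2.
    pose proof (Cmod_ge_0 z). pose proof (Cmod_ge_0 (Zs k)). pose proof (hZ k hk).
    unfold c. nra.
Qed.
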